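(* Let $\epsilon>0$, $\alpha\in(0,1)$, $0<\theta_0<\theta_1<1$ and $n\geq 1$ be given. Observe $X\sim \mathrm{Binom}(n,\theta)$, where $\theta$ is unknown. Let $N_0\sim \mathrm{Tulap}(0,b=e^{-\epsilon},0)$, and define the decision rule $\phi^*:\mathbb{Z}\to[0,1]$ by $\phi^*_x=F_{N_0}(x-m)$, where $m\in\mathbb{R}$ is chosen such that $\mathbb{E}_{\theta_0}\phi^*_X=\alpha$. Then $\phi^*$ is the uniformly most powerful level-$\alpha$ test of $H_0:\theta=\theta_0$ versus $H_1:\theta=\theta_1$ among $\mathscr D^n_{\epsilon,0}$.
   Context: Nearest integer function: for $t\in\mathbb{R}$, $[t]$ is the integer nearest to $t$, where for $z\in\mathbb{Z}$, $[z+1/2]$ is defined to be the nearest even integer. Tulap distribution: for $m\in\mathbb{R}$, $b\in(0,1)$, $q\in[0,1)$, $N_0\sim\mathrm{Tulap}(m,b,0)$ has cdf $F_{N_0}(x)=\frac{b^{-[x-m]}}{1+b}\big(b+(x-m-[x-m]+\tfrac12)(1-b)\big)$ for $x\leq [m]$ and $F_{N_0}(x)=1-\frac{b^{[x-m]}}{1+b}\big(b+([x-m]-(x-m)+\tfrac12)(1-b)\big)$ for $x>[m]$; and $N\sim \mathrm{Tulap}(m,b,q)$ has cdf $F_N(x)=\frac{F_{N_0}(x)-q/2}{1-q}\,I\{q/2\leq F_{N_0}(x)\leq 1-q/2\}+I\{F_{N_0}(x)>1-q/2\}$. A (randomized) test is a function $\phi:\{0,1,\dots,n\}\to[0,1]$,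 $\phi_x$ being the probability of rejecting $H_0$ when $X=x$; its power at $\theta$ is $\mathbb{E}_\theta\phi_X$. For $\epsilon>0,\delta\ge 0$, $\mathscr D^n_{\epsilon,\delta}$ is the set of tests $\phi$ such that for all $x\in\{0,\dots,n-1\}$: $\phi_x\le e^\epsilon\phi_{x+1}+\delta$, $\phi_{x+1}\le e^\epsilon\phi_x+\delta$, $1-\phi_x\le e^\epsilon(1-\phi_{x+1})+\delta$, $1-\phi_{x+1}\le e^\epsilon(1-\phi_x)+\delta$ (these are the tests satisfying $(\epsilon,\delta)$-differential privacy as functions of the count). A test $\phi^*\in\Phi$ is uniformly most powerful (UMP) at level $\alpha$ among $\Phi$ if $\sup_{\theta\in\Theta_0}\mathbb{E}_\theta\phi^*\le\alpha$ and for every $\phi\in\Phi$ with $\sup_{\theta\in\Theta_0}\mathbb{E}_\theta\phi\le\alpha$, $\mathbb{E}_\theta\phi^*\ge\mathbb{E}_\theta\phi$ for all $\theta$ in the alternative. *)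

From Stdlib Require Import Reals ZArith Lra.
Open Scope R_scope.

(* floor of t : up t is the unique integer with t < up t <= t + 1 *)
Definition floorZ (t : R) : Z := (up t - 1)%Z.

Definition round_near (t : R) : Z :=
  let f := floorZ t in
  let d := t - IZR f in
  if Rlt_dec d (1/2) then f
  else if Rlt_dec (1/2) d then (f + 1)%Z
  else if Z.even f then f else (f + 1)%Z.

Definition tulap_cdf (m b x : R) : R :=
  let k := round_near (x - m) in
  if Rle_dec x (IZR (round_near m)) then
    powerRZ b (- k) / (1 + b) * (b + (x - m - IZR k + 1/2) * (1 - b))
  else
    1 - powerRZ b k / (1 + b) * (b + (IZR k - (x - m) + 1/2) * (1 - b)).

Definition binom_expect (n : nat) (theta : R) (phi : nat -> R) : R :=
  sum_f_R0 (fun x => C n x * theta ^ x * (1 - theta) ^ (n - x) * phi x) n.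

Definition is_test (n : nat) (phi : nat -> R) : Prop :=
  forall x, (x <= n)%nat -> 0 <= phi x <= 1.

Definition DP_tests (n : nat) (eps delta : R) (phi : nat -> R) : Prop :=
  is_test n phi /\
  forall x, (x < n)%nat ->
    phi x <= exp eps * phi (S x) + delta /\
    phi (S x) <= exp eps * phi x + delta /\
    1 - phi x <= exp eps * (1 - phi (S x)) + delta /\
    1 - phi (S x) <= exp eps * (1 - phi x) + delta.

Definition UMP_simple (n : nat) (Phi : (nat -> R) -> Prop) (alpha theta0 theta1 : R)
  (phistar : nat -> R) : Prop :=
  Phi phistar /\
  binom_expect n theta0 phistar <= alpha /\
  forall phi, Phi phi -> binom_expect n theta0 phi <= alpha ->
    binom_expect n theta1 phi <= binom_expect n theta1 phistar.

Definition phi_star (eps m : R) (x : nat) : R :=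
  tulap_cdf 0 (exp (- eps)) (INR x - m).

(* With b = exp (- eps), the Tulap(0, b, 0) cdf F satisfies
   F (x + 1) = min (F x / b, 1 - b (1 - F x)): each value of phi* is the
   largest one that the (eps, 0)-DP constraints allow after the previous one.
   Hence phi* is differentially private, and for any private test phi,
   phi x < phi* x forces phi (x + 1) < phi* (x + 1), so phi* - phi changes sign
   at most once, from nonpositive to positive.  The binomial family has a
   likelihood ratio increasing in x, and the Karlin-Rubin argument turns
   E_theta0 (phi* - phi) >= 0 into E_theta1 (phi* - phi) >= 0. *)

From Stdlib Require Import Reals Lra Lia ZArith.
Open Scope R_scope.

Lemma floorZ_spec (t : R) : IZR (floorZ t) <= t < IZR (floorZ t) + 1.
Proof.
  unfold floorZ; rewrite minus_IZR.
  destruct (archimed t); lra.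
Qed.

Lemma round_near_spec (x : R) :
  IZR (round_near x) - 1/2 <= x <= IZR (round_near x) + 1/2.
Proof.
  unfold round_near; pose proof (floorZ_spec x).
  destruct (Rlt_dec _ _); [lra|].
  destruct (Rlt_dec _ _); [rewrite plus_IZR; lra|].
  destruct (Z.even _); [|rewrite plus_IZR]; lra.
Qed.

Lemma round_near_0 : round_near 0 = 0%Z.
Proof.
  destruct (round_near_spec 0) as [Hlo Hhi].
  assert (Hlt1 : (round_near 0 < 1)%Z) by (apply lt_IZR; lra).
  assert (Hgtm1 : (-1 < round_near 0)%Z) by (apply lt_IZR; lra).
  lia.
Qed.

Lemma powerRZ_le_1 (b : R) (z : Z) : 0 <= b < 1 -> (0 <= z)%Z -> powerRZ b z <= 1.
Proof.
  intros Hb Hz; rewrite <- (Z2Nat.id z Hz), <- pow_powerRZ.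
  destruct (Z.to_nat z) as [|k]; [simpl; lra|].
  apply Rlt_le, pow_lt_1_compat; [lra | lia].
Qed.

(* On [k - 1/2, k + 1/2], the cdf of Tulap(0, b, 0) is [tulap_piece b x k] when
   x <= 1/2 and [1 - tulap_piece b (- x) (- k)] when x >= -1/2. *)
Definition tulap_piece (b x : R) (k : Z) : R :=
  powerRZ b (- k) / (1 + b) * (b + (x - IZR k + 1/2) * (1 - b)).

Section TulapPiece.

Variable b : R.
Hypothesis b_gt0 : 0 < b.

Lemma tulap_piece_shift (x : R) (k : Z) :
  tulap_piece b (x + 1) (k + 1) = tulap_piece b x k / b.
Proof.
  unfold tulap_piece.
  replace (- k)%Z with (- (k + 1) + 1)%Z by lia.
  rewrite powerRZ_add, plus_IZR by lra; simpl; field; lra.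
Qed.

Lemma tulap_piece_tie (k : Z) :
  tulap_piece b (IZR k + 1/2) (k + 1) = tulap_piece b (IZR k + 1/2) k.
Proof.
  unfold tulap_piece.
  replace (- k)%Z with (- (k + 1) + 1)%Z by lia.
  rewrite powerRZ_add, plus_IZR by lra; simpl; field; lra.
Qed.

Lemma tulap_piece_indep (x : R) (k j : Z) :
  IZR k - 1/2 <= x <= IZR k + 1/2 -> IZR j - 1/2 <= x <= IZR j + 1/2 ->
  tulap_piece b x k = tulap_piece b x j.
Proof.
  intros Hk Hj.
  assert (Hle : (j - k <= 1)%Z) by (apply le_IZR; rewrite minus_IZR; lra).
  assert (Hge : (-1 <= j - k)%Z) by (apply le_IZR; rewrite minus_IZR; lra).
  assert (Hjk : j = k \/ j = (k + 1)%Z \/ k = (j + 1)%Z) by lia.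
  destruct Hjk as [-> | [-> | ->]]; [reflexivity | |];
    rewrite plus_IZR in *.
  - replace x with (IZR k + 1/2) by lra; symmetry; apply tulap_piece_tie.
  - replace x with (IZR j + 1/2) by lra; apply tulap_piece_tie.
Qed.

Lemma tulap_piece_reflect0 (x : R) : tulap_piece b x 0 = 1 - tulap_piece b (- x) 0.
Proof. unfold tulap_piece; simpl; field; lra. Qed.

Lemma tulap_cdf0_pieces (x : R) :
  tulap_cdf 0 b x =
  if Rle_dec x 0 then tulap_piece b x (round_near x)
  else 1 - tulap_piece b (- x) (- round_near x).
Proof.
  unfold tulap_cdf, tulap_piece; rewrite round_near_0, Rminus_0_r.
  destruct (Rle_dec _ _); [reflexivity|].
  rewrite Z.opp_involutive, opp_IZR; do 3 f_equal; ring.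
Qed.

Lemma tulap_cdf0_left (x : R) (k : Z) :
  x <= 1/2 -> IZR k - 1/2 <= x <= IZR k + 1/2 ->
  tulap_cdf 0 b x = tulap_piece b x k.
Proof.
  intros Hx Hk; pose proof (round_near_spec x) as Hr.
  rewrite tulap_cdf0_pieces; destruct (Rle_dec x 0).
  - apply tulap_piece_indep; assumption.
  - rewrite (tulap_piece_indep (- x) _ 0) by (rewrite ?opp_IZR; simpl; lra).
    rewrite <- tulap_piece_reflect0; apply tulap_piece_indep; simpl; lra.
Qed.

Lemma tulap_cdf0_right (x : R) (k : Z) :
  -1/2 <= x -> IZR k - 1/2 <= x <= IZR k + 1/2 ->
  tulap_cdf 0 b x = 1 - tulap_piece b (- x) (- k).
Proof.
  intros Hx Hk; pose proof (round_near_spec x) as Hr.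
  rewrite tulap_cdf0_pieces; destruct (Rle_dec x 0).
  - rewrite (tulap_piece_indep x _ 0), tulap_piece_reflect0 by (simpl; lra).
    f_equal; apply tulap_piece_indep; rewrite ?opp_IZR; simpl; lra.
  - f_equal; apply tulap_piece_indep; rewrite !opp_IZR; lra.
Qed.

End TulapPiece.

Section TulapBounds.

Variable b : R.
Hypothesis b_range : 0 < b < 1.

Lemma tulap_piece_nonneg (x : R) (k : Z) :
  IZR k - 1/2 <= x <= IZR k + 1/2 -> 0 <= tulap_piece b x k.
Proof.
  intros Hk; unfold tulap_piece.
  pose proof (powerRZ_lt b (- k) ltac:(lra)).
  apply Rmult_le_pos; [apply Rlt_le, Rdiv_lt_0_compat | nra]; lra.
Qed.

Lemma tulap_piece_le (x : R) (k : Z) :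
  IZR k - 1/2 <= x <= IZR k + 1/2 -> (1 + b) * tulap_piece b x k <= powerRZ b (- k).
Proof.
  intros Hk; unfold tulap_piece.
  pose proof (powerRZ_lt b (- k) ltac:(lra)).
  replace ((1 + b) * _) with (powerRZ b (- k) * (b + (x - IZR k + 1/2) * (1 - b)))
    by (field; lra).
  assert (b + (x - IZR k + 1/2) * (1 - b) <= 1) by nra.
  rewrite <- (Rmult_1_r (powerRZ b (- k))) at 2; apply Rmult_le_compat_l; lra.
Qed.

Lemma tulap_cdf0_le_ratio (x : R) : x <= -1/2 -> (1 + b) * tulap_cdf 0 b x <= b.
Proof.
  intros Hx; set (k := (- floorZ (1/2 - x))%Z).
  assert (Hk : IZR k - 1/2 < x <= IZR k + 1/2).
  { pose proof (floorZ_spec (1/2 - x)); unfold k; rewrite opp_IZR; lra. }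
  assert (Hkneg : (k < 0)%Z) by (apply lt_IZR; lra).
  rewrite (tulap_cdf0_left b) with (k := k) by lra.
  eapply Rle_trans; [apply tulap_piece_le; lra|].
  replace (- k)%Z with (- k - 1 + 1)%Z by lia.
  rewrite powerRZ_add by lra; simpl.
  pose proof (powerRZ_le_1 b (- k - 1) ltac:(lra) ltac:(lia)); nra.
Qed.

Lemma tulap_cdf0_ge_ratio (x : R) : -1/2 <= x -> b <= (1 + b) * tulap_cdf 0 b x.
Proof.
  intros Hx; set (k := floorZ (x + 1/2)).
  assert (Hk : IZR k - 1/2 <= x < IZR k + 1/2).
  { pose proof (floorZ_spec (x + 1/2)); unfold k; lra. }
  assert (Hkpos : (-1 < k)%Z) by (apply lt_IZR; lra).
  rewrite (tulap_cdf0_right b) with (k := k) by lra.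
  pose proof (tulap_piece_le (- x) (- k) ltac:(rewrite opp_IZR; lra)) as Hpiece.
  rewrite Z.opp_involutive in Hpiece.
  pose proof (powerRZ_le_1 b k ltac:(lra) ltac:(lia)); lra.
Qed.

Lemma tulap_cdf0_bounds (x : R) : 0 <= tulap_cdf 0 b x <= 1.
Proof.
  pose proof (round_near_spec x) as Hr.
  destruct (Rle_dec x (-1/2)).
  - pose proof (tulap_cdf0_le_ratio x ltac:(lra)).
    rewrite (tulap_cdf0_left b) with (k := round_near x) in * by lra.
    pose proof (tulap_piece_nonneg x (round_near x) Hr); nra.
  - pose proof (tulap_cdf0_ge_ratio x ltac:(lra)).
    rewrite (tulap_cdf0_right b) with (k := round_near x) in * by lra.
    pose proof (tulap_piece_nonneg (- x) (- round_near x) ltac:(rewrite opp_IZR; lra)); nra.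
Qed.

End TulapBounds.

(* The largest value of phi (x + 1) that the (eps, 0)-DP constraints allow
   when phi x = p, for E = exp eps. *)
Definition dp_step (E p : R) : R := Rmin (E * p) (1 - (1 - p) / E).

Section DPStep.

Variable E : R.
Hypothesis E_ge1 : 1 <= E.

Lemma le_dp_step_cap (q p : R) : q <= 1 - (1 - p) / E <-> 1 - p <= E * (1 - q).
Proof.
  assert (Hdiv : (1 - p) / E * E = 1 - p) by (field; lra).
  split; intros H; nra.
Qed.

Lemma le_dp_step (q p : R) : q <= dp_step E p <-> q <= E * p /\ 1 - p <= E * (1 - q).
Proof.
  rewrite <- le_dp_step_cap; unfold dp_step; split.
  - intros H; split; eapply Rle_trans; eauto using Rmin_l, Rmin_r.
  - intros [H1 H2]; apply Rmin_glb; assumption.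
Qed.

Lemma dp_step_ge (p : R) : 0 <= p <= 1 -> p <= dp_step E p.
Proof. intros Hp; apply le_dp_step; split; nra. Qed.

Lemma dp_step_lt (p p' : R) : p < p' -> dp_step E p < dp_step E p'.
Proof.
  intros Hpp'; unfold dp_step at 2; apply Rmin_glb_lt.
  - apply (Rle_lt_trans _ (E * p)); [apply Rmin_l | nra].
  - apply (Rle_lt_trans _ (1 - (1 - p) / E)); [apply Rmin_r|].
    apply Rplus_lt_compat_l, Ropp_lt_contravar, Rmult_lt_compat_r;
      [apply Rinv_0_lt_compat|]; lra.
Qed.

Lemma dp_step_lower (p : R) : (1 + E) * p <= 1 -> dp_step E p = E * p.
Proof. intros Hp; apply Rmin_left, le_dp_step_cap; nra. Qed.

Lemma dp_step_upper (p : R) : 1 <= (1 + E) * p -> dp_step E p = 1 - (1 - p) / E.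
Proof.
  intros Hp; apply Rmin_right, (Rmult_le_reg_r E); [lra|].
  replace ((1 - (1 - p) / E) * E) with (E - 1 + p) by (field; lra); nra.
Qed.

End DPStep.

Lemma tulap_cdf0_step (b x : R) : 0 < b < 1 ->
  tulap_cdf 0 b (x + 1) = dp_step (/ b) (tulap_cdf 0 b x).
Proof.
  intros Hb; set (k := round_near x); pose proof (round_near_spec x) as Hk; fold k in Hk.
  assert (Hinv : 1 <= / b) by (rewrite <- Rinv_1; apply Rinv_le_contravar; lra).
  assert (Hscale : (1 + / b) * tulap_cdf 0 b x * b = (1 + b) * tulap_cdf 0 b x)
    by (field; lra).
  destruct (Rle_dec x (-1/2)) as [Hx | Hx].
  - pose proof (tulap_cdf0_le_ratio b Hb x Hx) as Hratio.
    rewrite dp_step_lower; [|assumption|].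
    + rewrite (tulap_cdf0_left b) with (k := (k + 1)%Z) by (rewrite ?plus_IZR; lra).
      rewrite tulap_piece_shift, <- (tulap_cdf0_left b) by lra; field; lra.
    + apply (Rmult_le_reg_r b); lra.
  - pose proof (tulap_cdf0_ge_ratio b Hb x ltac:(lra)) as Hratio.
    rewrite dp_step_upper; [|assumption|].
    + rewrite (tulap_cdf0_right b) with (k := (k + 1)%Z) by (rewrite ?plus_IZR; lra).
      rewrite (tulap_cdf0_right b ltac:(lra) x k) by lra.
      replace (- x)%R with (- (x + 1) + 1)%R by ring.
      replace (- k)%Z with (- (k + 1) + 1)%Z by lia.
      rewrite tulap_piece_shift by lra; field; lra.
    + apply (Rmult_le_reg_r b); lra.
Qed.

Lemma exp_opp_range (eps : R) : 0 < eps -> 0 < exp (- eps) < 1.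
Proof.
  intros He; split; [apply exp_pos|].
  rewrite <- exp_0; apply exp_increasing; lra.
Qed.

Lemma phi_star_step (eps m : R) (x : nat) : 0 < eps ->
  phi_star eps m (S x) = dp_step (exp eps) (phi_star eps m x).
Proof.
  intros He; unfold phi_star.
  replace (INR (S x) - m) with (INR x - m + 1) by (rewrite S_INR; ring).
  rewrite tulap_cdf0_step, exp_Ropp, Rinv_inv by (apply exp_opp_range, He).
  reflexivity.
Qed.

Lemma phi_star_is_test (n : nat) (eps m : R) : 0 < eps -> is_test n (phi_star eps m).
Proof. intros He x _; apply tulap_cdf0_bounds, exp_opp_range, He. Qed.

Lemma DP_tests_of_dp_step (n : nat) (eps : R) (phi : nat -> R) : 0 < eps ->
  is_test n phi -> (forall x, (x < n)%nat -> phi (S x) = dp_step (exp eps) (phi x)) ->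
  DP_tests n eps 0 phi.
Proof.
  intros He Htest Hstep; split; [exact Htest|]; intros x Hx.
  pose proof (exp_ineq1_le eps) as HE.
  pose proof (Htest x ltac:(lia)) as Hpx; pose proof (Htest (S x) Hx) as HpSx.
  pose proof (dp_step_ge (exp eps) ltac:(lra) (phi x) Hpx) as Hmono.
  rewrite <- Hstep in Hmono by exact Hx.
  destruct (proj1 (le_dp_step (exp eps) ltac:(lra) (phi (S x)) (phi x)))
    as [Hup Hcap]; [rewrite Hstep by exact Hx; lra|].
  rewrite !Rplus_0_r; repeat split; nra.
Qed.

Lemma DP_tests_le_dp_step (n : nat) (eps : R) (phi : nat -> R) (x : nat) :
  0 < eps -> DP_tests n eps 0 phi -> (x < n)%nat -> phi (S x) <= dp_step (exp eps) (phi x).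
Proof.
  intros He [_ Hdp] Hx; pose proof (exp_ineq1_le eps).
  destruct (Hdp x Hx) as [_ [Hup [Hcap _]]].
  apply le_dp_step; lra.
Qed.

Lemma DP_tests_lt_propagate (n : nat) (eps : R) (phi psi : nat -> R) (x : nat) :
  0 < eps -> DP_tests n eps 0 phi ->
  (forall y, (y < n)%nat -> psi (S y) = dp_step (exp eps) (psi y)) ->
  (x < n)%nat -> phi x < psi x -> phi (S x) < psi (S x).
Proof.
  intros He Hphi Hpsi Hx Hlt; rewrite Hpsi by exact Hx.
  apply (Rle_lt_trans _ _ _ (DP_tests_le_dp_step n eps phi x He Hphi Hx)).
  apply dp_step_lt; [pose proof (exp_ineq1_le eps); lra | exact Hlt].
Qed.

Section SingleCrossing.

Variables (N : nat) (L d : nat -> R).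
Hypothesis L_nonneg : forall x, (x <= N)%nat -> 0 <= L x.
Hypothesis L_mono : forall x, (x < N)%nat -> L x <= L (S x).
Hypothesis d_crossing : forall x, (x < N)%nat -> 0 < d x -> 0 < d (S x).

Lemma ratio_le (x y : nat) : (x <= y <= N)%nat -> L x <= L y.
Proof.
  intros [Hxy HyN]; induction Hxy as [|y Hxy IH]; [lra|].
  apply (Rle_trans _ (L y)); [apply IH | apply L_mono]; lia.
Qed.

Lemma crossing_persists (x y : nat) : (x <= y <= N)%nat -> 0 < d x -> 0 < d y.
Proof.
  intros [Hxy HyN] Hdx; induction Hxy as [|y Hxy IH]; [assumption|].
  apply d_crossing; [lia | apply IH; lia].
Qed.

(* [c] is the likelihood ratio at the point where [d] turns positive. *)
Lemma crossing_threshold :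
  exists c, 0 <= c /\ forall x, (x <= N)%nat -> c * d x <= L x * d x.
Proof.
  enough (H : forall j, (j <= N)%nat ->
             exists c, 0 <= c /\ forall x, (x <= j)%nat -> c * d x <= L x * d x)
    by (apply H; lia).
  induction j as [|j IH]; intros Hj.
  - exists (L 0%nat); split; [apply L_nonneg; lia|]; intros x Hx.
    replace x with 0%nat by lia; lra.
  - destruct (Rle_lt_dec (d (S j)) 0) as [HdS | HdS].
    + exists (L (S j)); split; [apply L_nonneg; lia|]; intros x Hx.
      assert (d x <= 0).
      { destruct (Rle_lt_dec (d x) 0) as [|Hdx]; [assumption|].
        pose proof (crossing_persists x (S j) ltac:(lia) ltac:(lra)); lra. }
      pose proof (ratio_le x (S j) ltac:(lia)); nra.
    + destruct IH as [c [Hc Hcross]]; [lia|].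
      exists (Rmin c (L (S j))); split; [apply Rmin_glb; [|apply L_nonneg]; lia || lra|].
      intros x Hx; destruct (Nat.eq_dec x (S j)) as [-> | Hne].
      * pose proof (Rmin_r c (L (S j))); nra.
      * pose proof (Hcross x ltac:(lia)); pose proof (ratio_le x (S j) ltac:(lia)).
        unfold Rmin; destruct (Rle_dec c (L (S j))); [assumption|].
        destruct (Rle_lt_dec (d x) 0); nra.
Qed.

End SingleCrossing.

(* Karlin-Rubin: termwise, w1 d = (w1 / w0) w0 d >= c w0 d. *)
Lemma mlr_sum_nonneg (N : nat) (w0 w1 d : nat -> R) :
  (forall x, (x <= N)%nat -> 0 < w0 x) ->
  (forall x, (x <= N)%nat -> 0 <= w1 x) ->
  (forall x, (x < N)%nat -> w1 x * w0 (S x) <= w1 (S x) * w0 x) ->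
  (forall x, (x < N)%nat -> 0 < d x -> 0 < d (S x)) ->
  0 <= sum_f_R0 (fun x => w0 x * d x) N ->
  0 <= sum_f_R0 (fun x => w1 x * d x) N.
Proof.
  intros Hw0 Hw1 Hmlr Hd Hsum0.
  set (L x := w1 x / w0 x).
  assert (HL : forall x, (x <= N)%nat -> w1 x = L x * w0 x)
    by (intros x Hx; unfold L; field; apply Rgt_not_eq, Hw0, Hx).
  destruct (crossing_threshold N L d) as [c [Hc Hcross]]; [| |exact Hd|].
  - intros x Hx; unfold L, Rdiv.
    apply Rmult_le_pos; [apply Hw1 | apply Rlt_le, Rinv_0_lt_compat, Hw0]; exact Hx.
  - intros x Hx; unfold L.
    pose proof (Hw0 x ltac:(lia)); pose proof (Hw0 (S x) ltac:(lia)).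
    apply (Rmult_le_reg_r (w0 x * w0 (S x))); [nra|].
    replace (w1 x / w0 x * (w0 x * w0 (S x))) with (w1 x * w0 (S x)) by (field; lra).
    replace (w1 (S x) / w0 (S x) * (w0 x * w0 (S x))) with (w1 (S x) * w0 x)
      by (field; lra).
    apply Hmlr, Hx.
  - apply (Rle_trans _ (c * sum_f_R0 (fun x => w0 x * d x) N)); [nra|].
    rewrite scal_sum; apply sum_Rle; intros x Hx.
    rewrite HL by exact Hx; pose proof (Hcross x Hx); pose proof (Hw0 x Hx); nra.
Qed.

Lemma C_pos (n x : nat) : 0 < C n x.
Proof.
  unfold C; pose proof (INR_fact_lt_0 n); pose proof (INR_fact_lt_0 x).
  pose proof (INR_fact_lt_0 (n - x)).
  apply Rdiv_lt_0_compat; [|apply Rmult_lt_0_compat]; assumption.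
Qed.

Definition binom_weight (n : nat) (theta : R) (x : nat) : R :=
  C n x * theta ^ x * (1 - theta) ^ (n - x).

Lemma binom_weight_pos (n : nat) (theta : R) (x : nat) :
  0 < theta < 1 -> 0 < binom_weight n theta x.
Proof.
  intros Ht; unfold binom_weight; pose proof (C_pos n x).
  apply Rmult_lt_0_compat; [apply Rmult_lt_0_compat|]; try apply pow_lt; lra.
Qed.

Lemma binom_weight_mlr (n : nat) (theta0 theta1 : R) (x : nat) :
  0 < theta0 -> theta0 < theta1 -> theta1 < 1 -> (x < n)%nat ->
  binom_weight n theta1 x * binom_weight n theta0 (S x) <=
  binom_weight n theta1 (S x) * binom_weight n theta0 x.
Proof.
  intros H0 H01 H1 Hx; unfold binom_weight.
  replace (n - x)%nat with (S (n - S x)) by lia; set (a := (n - S x)%nat); simpl pow.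
  pose proof (C_pos n x) as Hc0; pose proof (C_pos n (S x)) as Hc1; revert Hc0 Hc1.
  generalize (C n x) (C n (S x)); intros c0 c1 Hc0 Hc1.
  set (K := c0 * c1 * theta1 ^ x * theta0 ^ x * (1 - theta1) ^ a * (1 - theta0) ^ a).
  assert (HK : 0 <= K) by (unfold K; repeat apply Rmult_le_pos; try apply pow_le; lra).
  match goal with |- ?lhs <= ?rhs =>
    replace lhs with (K * ((1 - theta1) * theta0)) by (unfold K; ring);
    replace rhs with (K * (theta1 * (1 - theta0))) by (unfold K; ring) end.
  apply Rmult_le_compat_l; nra.
Qed.

Lemma binom_expect_mlr_le (n : nat) (theta0 theta1 : R) (f g : nat -> R) :
  0 < theta0 -> theta0 < theta1 -> theta1 < 1 ->
  (forall x, (x < n)%nat -> g x < f x -> g (S x) < f (S x)) ->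
  binom_expect n theta0 g <= binom_expect n theta0 f ->
  binom_expect n theta1 g <= binom_expect n theta1 f.
Proof.
  intros H0 H01 H1 Hcross Hlevel.
  assert (Hdiff : forall theta, binom_expect n theta f - binom_expect n theta g =
            sum_f_R0 (fun x => binom_weight n theta x * (f x - g x)) n).
  { intros theta; unfold binom_expect; rewrite <- minus_sum.
    apply sum_eq; intros x _; unfold binom_weight; ring. }
  enough (0 <= binom_expect n theta1 f - binom_expect n theta1 g) by lra.
  rewrite Hdiff; apply mlr_sum_nonneg with (w0 := binom_weight n theta0).
  - intros x _; apply binom_weight_pos; lra.
  - intros x _; apply Rlt_le, binom_weight_pos; lra.
  - intros x Hx; apply binom_weight_mlr; assumption.
  - intros x Hx Hd; specialize (Hcross x Hx); lra.
  - rewrite <- Hdiff; lra.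
Qed.

Theorem theorem3 (eps alpha theta0 theta1 : R) (n : nat) (m : R) :
  0 < eps -> 0 < alpha < 1 -> 0 < theta0 -> theta0 < theta1 -> theta1 < 1 ->
  (1 <= n)%nat ->
  binom_expect n theta0 (phi_star eps m) = alpha ->
  UMP_simple n (DP_tests n eps 0) alpha theta0 theta1 (phi_star eps m).
Proof.
  intros He _ H0 H01 H1 _ Hsize.
  assert (Hstep : forall x, (x < n)%nat ->
            phi_star eps m (S x) = dp_step (exp eps) (phi_star eps m x))
    by (intros x _; apply phi_star_step, He).
  split; [|split; [lra|]].
  - apply DP_tests_of_dp_step; [exact He | apply phi_star_is_test, He | exact Hstep].
  - intros phi Hphi Hlevel.
    apply binom_expect_mlr_le with (theta0 := theta0); [assumption.. | |lra].
    intros x Hx; apply (DP_tests_lt_propagate n eps); assumption.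
Qed.
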